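(* Let $(A,\succ_A,\prec_A)$ be an anti-pre-Leibniz algebra with sub-adjacent Leibniz algebra $(A,\circ_A)$. If $(l_\succ,r_\succ,l_\prec,r_\prec,V)$ is a representation of $(A,\succ_A,\prec_A)$, then, with $l_\circ=l_\succ+l_\prec$ and $r_\circ=r_\succ+r_\prec$, $$\big(-l_\circ^*,\;-l_\prec^*-r_\succ^*,\;l_\prec^*,\;l_\circ^*+r_\circ^*,\;V^*\big)$$ is also a representation of $(A,\succ_A,\prec_A)$. In particular, $(-\mathcal L^*_{\circ_A},-\mathcal L^*_{\prec_A}-\mathcal R^*_{\succ_A},\mathcal L^*_{\prec_A},\mathcal L^*_{\circ_A}+\mathcal R^*_{\circ_A},A^* )$ is a representation of $(A,\succ_A,\prec_A)$.
   Context: All vector spaces are finite-dimensional over a field $\mathbb K$ of characteristic zero. For a multiplication $\ast$, $\mathcal L_\ast(x)y=x\ast y$, $\mathcal R_\ast(x)y=y\ast x$; for $f:A\to\mathrm{End}(V)$, $f^*:A\to\mathrm{End}(V^* )$ is $\langle f^*(x)u^*,v\rangle=-\langle u^*,f(x)v\rangle$. An anti-pre-Leibniz algebra is a vector space $A$ with multiplications $\succ_A,\prec_A$ such that, with $x\circ_A y=x\succ_A y+x\prec_A y$, for all $x,y,z$: (AL1) $(x\circ_A y)\prec_A z=x\succ_A(y\circ_A z)-y\succ_A(x\circ_A z)$; (AL2) $(x\circ_A y)\succ_A z=y\succ_A(x\succ_A z)-x\succ_A(y\succ_A z)$; (AL3) $x\prec_A(y\circ_A z)=(y\succ_A x)\prec_A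 z-y\succ_A(x\prec_A z)$; (AL4) $(x\succ_A y)\prec_A z=-(y\prec_A x)\prec_A z$. Its sub-adjacent Leibniz algebra is $(A,\circ_A)$. A representation of an anti-pre-Leibniz algebra $(A,\succ_A,\prec_A)$ is a tuple $(l_\succ,r_\succ,l_\prec,r_\prec,V)$ of linear maps $A\to\mathrm{End}(V)$ such that, writing $l_\circ=l_\succ+l_\prec$, $r_\circ=r_\succ+r_\prec$, for all $x,y\in A$ (as operators on $V$): (R1) $r_\prec(x)r_\circ(y)=r_\succ(y\circ_A x)-l_\succ(y)r_\circ(x)$; (R2) $r_\succ(x)r_\circ(y)=l_\succ(y)r_\succ(x)-r_\succ(y\succ_A x)$; (R3) $r_\prec(x\circ_A y)=r_\prec(y)l_\succ(x)-l_\succ(x)r_\prec(y)$; (R4) $r_\prec(x)r_\succ(y)=-r_\prec(x)l_\prec(y)$; (R5) $r_\succ(x)l_\circ(y)=r_\succ(y\succ_A x)-l_\succ(y)r_\succ(x)$; (R6) $l_\prec(x)r_\circ(y)=r_\prec(y)r_\succ(x)-r_\succ(x\prec_A y)$; (R7) $r_\prec(x)l_\succ(y)=-r_\prec(x)r_\prec(y)$; (R8) $l_\prec(x\circ_A y)=l_\succ(x)l_\circ(y)-l_\succ(y)l_\circ(x)$; (R9) $l_\succ(x\circ_A y)=l_\succ(y)l_\succ(x)-l_\succ(x)l_\succ(y)$; (R10) $l_\prec(x)l_\circ(y)=l_\prec(y\succ_A x)-l_\succ(y)l_\prec(x)$; (R11) $l_\prec(x\succ_A y)=-l_\prec(y\prec_A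 x)$. *)

From HB Require Import structures.
From mathcomp Require Import all_boot all_algebra.
Set Implicit Arguments. Unset Strict Implicit. Unset Printing Implicit Defensive.
Import GRing.Theory.
Local Open Scope ring_scope.

Section Defs.
Variable K : fieldType.

Definition bilinear_op (A : vectType K) (op : A -> A -> A) : Prop :=
  (forall (a : K) (x y z : A), op z (a *: x + y) = a *: op z x + op z y) /\
  (forall (a : K) (x y z : A), op (a *: x + y) z = a *: op x z + op y z).

Definition linmap (A W : vectType K) (f : A -> W) : Prop :=
  forall (a : K) (x y : A), f (a *: x + y) = a *: f x + f y.

Section APL.
Variable A : vectType K.
Variables (sc pc : A -> A -> A). (* sc = succ, pc = prec *)
Let cc x y := sc x y + pc x y.

Definition anti_pre_Leibniz : Prop :=
  [/\ (forall x y z, pc (cc x y) z = sc x (cc y z) - sc y (cc x z)),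
      (forall x y z, sc (cc x y) z = sc y (sc x z) - sc x (sc y z)),
      (forall x y z, pc x (cc y z) = pc (sc y x) z - sc y (pc x z)) &
      (forall x y z, pc (sc x y) z = - pc (pc y x) z)].

Definition is_rep (V : vectType K) (ls rs lp rp : A -> 'End(V)) : Prop :=
  let lc x := ls x + lp x in
  let rc x := rs x + rp x in
  (linmap ls /\ linmap rs /\ linmap lp /\ linmap rp) /\
  ((forall x y, (rp x \o rc y)%VF = rs (cc y x) - (ls y \o rc x)%VF) /\
      (forall x y, (rs x \o rc y)%VF = (ls y \o rs x)%VF - rs (sc y x)) /\
      (forall x y, rp (cc x y) = (rp y \o ls x)%VF - (ls x \o rp y)%VF) /\
      (forall x y, (rp x \o rs y)%VF = - (rp x \o lp y)%VF) /\
      (forall x y, (rs x \o lc y)%VF = rs (sc y x) - (ls y \o rs x)%VF) /\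
      (forall x y, (lp x \o rc y)%VF = (rp y \o rs x)%VF - rs (pc x y)) /\
      (forall x y, (rp x \o ls y)%VF = - (rp x \o rp y)%VF) /\
      (forall x y, lp (cc x y) = (ls x \o lc y)%VF - (ls y \o lc x)%VF) /\
      (forall x y, ls (cc x y) = (ls y \o ls x)%VF - (ls x \o ls y)%VF) /\
      (forall x y, (lp x \o lc y)%VF = lp (sc y x) - (ls y \o lp x)%VF) /\
      (forall x y, lp (sc x y) = - lp (pc y x))).

End APL.

(* dual space V^* := 'Hom(V, K^o); dual map f^*(x) u^* = - u^* \o f(x),
   i.e. <f^*(x)u^*, v> = - <u^*, f(x) v> *)
Definition dualmap (A V : vectType K) (f : A -> 'End(V)) :
    A -> 'End('Hom(V, K^o)) :=
  fun x => linfun (fun u : 'Hom(V, K^o) => - (u \o f x)%VF).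

Definition Lmul (A : vectType K) (op : A -> A -> A) : A -> 'End(A) :=
  fun x => linfun (op x).
Definition Rmul (A : vectType K) (op : A -> A -> A) : A -> 'End(A) :=
  fun x => linfun (fun y => op y x).

End Defs.

(* Put T^t u := u \o T for T : 'End(V).  Then f^*(x) = - (f x)^t and
   (S \o T)^t = T^t \o S^t, so each axiom of the dual tuple is the transpose
   of an identity between composites of l_succ, r_succ, l_prec, r_prec.  For
   (R8), (R10), (R11) that identity is the axiom itself.  The others follow from
   the axioms together with three consequences of them: r_succ(x) and r_prec(x)
   vanish on the image of l_circ(y) + r_circ(y), and (l_circ, r_circ) satisfies
   l_circ(x o y) = [l_circ x, l_circ y], r_circ(x o y) = l_circ x r_circ y -
   r_circ y l_circ x.  The second claim is the first one applied to the regular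
   representation (L_succ, R_succ, L_prec, R_prec, A), whose axioms are,
   pointwise, instances of (AL1)-(AL4). *)

From HB Require Import structures.
From mathcomp Require Import all_boot all_algebra.
From mathcomp Require Import ring.
From Stdlib Require Import FunctionalExtensionality.
Import GRing.Theory.
Local Open Scope ring_scope.
Set Implicit Arguments. Unset Strict Implicit. Unset Printing Implicit Defensive.

Section LinearMaps.
Variable K : fieldType.

Lemma linfun_linearE (aT rT : vectType K) (f : aT -> rT) :
  linear f -> forall x, linfun f x = f x.
Proof.
move=> f_lin x.
pose fL : {linear aT -> rT} := HB.pack f (GRing.isLinear.Build _ _ _ _ f f_lin).
exact: (lfunE fL).
Qed.

Section Linmap.
Variables (A W : vectType K).
Implicit Types f g : A -> W.

Lemma linmapD f : linmap f -> {morph f : x y / x + y}.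
Proof. by move=> f_lin x y; have := f_lin 1 x y; rewrite !scale1r. Qed.

Lemma linmap_add f g : linmap f -> linmap g -> linmap (fun x => f x + g x).
Proof. by move=> f_lin g_lin a x y; rewrite f_lin g_lin scalerDr addrACA. Qed.

Lemma linmap_opp f : linmap f -> linmap (fun x => - f x).
Proof. by move=> f_lin a x y; rewrite f_lin opprD scalerN. Qed.

End Linmap.

Lemma dualmapE (A V : vectType K) (f : A -> 'End(V)) x u :
  dualmap f x u = - (u \o f x)%VF.
Proof.
rewrite /dualmap linfun_linearE // => a w1 w2; apply/lfunP => v.
by rewrite !lfun_simp /= scalerN opprD.
Qed.

Lemma dualmap_pairE (A V : vectType K) (f : A -> 'End(V)) x u v :
  dualmap f x u v = - u (f x v).
Proof. by rewrite dualmapE !lfun_simp. Qed.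

Lemma linmap_dualmap (A V : vectType K) (f : A -> 'End(V)) :
  linmap f -> linmap (dualmap f).
Proof.
move=> f_lin a x y; apply/lfunP => u; apply/lfunP => v.
by rewrite !lfun_simp !dualmap_pairE f_lin !lfun_simp linearD linearZ opprD scalerN.
Qed.

Lemma lfun_applyD (aT rT : vectType K) (f : 'Hom(aT, rT)) : {morph f : x y / x + y}.
Proof. exact: raddfD. Qed.

Lemma lfun_applyN (aT rT : vectType K) (f : 'Hom(aT, rT)) : {morph f : x / - x}.
Proof. exact: raddfN. Qed.

Lemma lfun_apply0 (aT rT : vectType K) (f : 'Hom(aT, rT)) : f 0 = 0.
Proof. exact: raddf0. Qed.

Section Transpose.
Variable V : vectType K.

Lemma lfun_forms_ext (a b : V) : (forall u : 'Hom(V, K^o), u a = u b) -> a = b.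
Proof.
move=> eq_ab; rewrite (coord_vbasis (memvf a)) (coord_vbasis (memvf b)).
apply: eq_bigr => i _; congr (_ *: _).
have := eq_ab (linfun (coord (vbasis fullv) i : V -> K^o)).
by rewrite !linfun_linearE //; exact: coord_is_scalar.
Qed.

Definition transpose (T : 'End(V)) : 'End('Hom(V, K^o)) := linfun (fun u => u \o T)%VF.

Lemma transposeE T u : transpose T u = (u \o T)%VF.
Proof. by rewrite linfun_linearE // => a u1 u2; rewrite comp_lfunDl comp_lfunZl. Qed.

Lemma transposeD : {morph transpose : S T / S + T}.
Proof. by move=> S T; apply/lfunP => u; rewrite !lfun_simp !transposeE comp_lfunDr. Qed.

Lemma transposeN : {morph transpose : T / - T}.
Proof. by move=> T; apply/lfunP => u; rewrite !lfun_simp !transposeE comp_lfunNr. Qed.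

Lemma transpose_comp S T : transpose (S \o T)%VF = (transpose T \o transpose S)%VF.
Proof. by apply/lfunP => u; rewrite !lfun_simp !transposeE comp_lfunA. Qed.

Lemma dualmap_transpose (A : vectType K) (f : A -> 'End(V)) x :
  dualmap f x = - transpose (f x).
Proof. by apply/lfunP => u; rewrite dualmapE !lfun_simp transposeE. Qed.

End Transpose.

Lemma LmulE (A : vectType K) (op : A -> A -> A) :
  bilinear_op op -> forall x y, Lmul op x y = op x y.
Proof. by move=> [op_linr _] x y; rewrite linfun_linearE // => a u w; exact: op_linr. Qed.

Lemma RmulE (A : vectType K) (op : A -> A -> A) :
  bilinear_op op -> forall x y, Rmul op x y = op y x.
Proof. by move=> [_ op_linl] x y; rewrite linfun_linearE // => a u w; exact: op_linl. Qed.

Lemma linmap_Lmul (A : vectType K) (op : A -> A -> A) :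
  bilinear_op op -> linmap (Lmul op).
Proof.
move=> op_bil a x y; apply/lfunP => z.
by rewrite !lfun_simp !LmulE // op_bil.2.
Qed.

Lemma linmap_Rmul (A : vectType K) (op : A -> A -> A) :
  bilinear_op op -> linmap (Rmul op).
Proof.
move=> op_bil a x y; apply/lfunP => z.
by rewrite !lfun_simp !RmulE // op_bil.1.
Qed.

Lemma bilinear_op_add (A : vectType K) (op1 op2 : A -> A -> A) :
  bilinear_op op1 -> bilinear_op op2 -> bilinear_op (fun x y => op1 x y + op2 x y).
Proof.
move=> [op1_linr op1_linl] [op2_linr op2_linl].
by split=> a x y z; rewrite ?(op1_linr, op2_linr, op1_linl, op2_linl) scalerDr addrACA.
Qed.

Lemma Lmul_add (A : vectType K) (op1 op2 : A -> A -> A) :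
  bilinear_op op1 -> bilinear_op op2 ->
  Lmul (fun x y => op1 x y + op2 x y) = (fun x => Lmul op1 x + Lmul op2 x).
Proof.
move=> op1_bil op2_bil; apply: functional_extensionality => x; apply/lfunP => z.
by rewrite add_lfunE !LmulE //; exact: bilinear_op_add.
Qed.

Lemma Rmul_add (A : vectType K) (op1 op2 : A -> A -> A) :
  bilinear_op op1 -> bilinear_op op2 ->
  Rmul (fun x y => op1 x y + op2 x y) = (fun x => Rmul op1 x + Rmul op2 x).
Proof.
move=> op1_bil op2_bil; apply: functional_extensionality => x; apply/lfunP => z.
by rewrite add_lfunE !RmulE //; exact: bilinear_op_add.
Qed.

End LinearMaps.

Lemma addr_combination (R : comNzRingType) (a b l r k : R) :
  l = r -> a + k * (l - r) = b -> a = b.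
Proof. by move=> ->; rewrite subrr mulr0 addr0. Qed.

Section DualRepresentation.
Variables (K : fieldType) (A : vectType K) (sc pc : A -> A -> A).
Variables (V : vectType K) (ls rs lp rp : A -> 'End(V)).
Hypothesis rep : is_rep sc pc ls rs lp rp.

Let cc x y := sc x y + pc x y.
Let lc x := ls x + lp x.
Let rc x := rs x + rp x.

Let ls_lin : linmap ls := rep.1.1.
Let rs_lin : linmap rs := rep.1.2.1.
Let lp_lin : linmap lp := rep.1.2.2.1.
Let rp_lin : linmap rp := rep.1.2.2.2.

Let R1 x y : (rp x \o rc y)%VF = rs (cc y x) - (ls y \o rc x)%VF := rep.2.1 x y.
Let R2 x y : (rs x \o rc y)%VF = (ls y \o rs x)%VF - rs (sc y x) := rep.2.2.1 x y.
Let R3 x y : rp (cc x y) = (rp y \o ls x)%VF - (ls x \o rp y)%VF := rep.2.2.2.1 x y.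
Let R4 x y : (rp x \o rs y)%VF = - (rp x \o lp y)%VF := rep.2.2.2.2.1 x y.
Let R5 x y : (rs x \o lc y)%VF = rs (sc y x) - (ls y \o rs x)%VF :=
  rep.2.2.2.2.2.1 x y.
Let R6 x y : (lp x \o rc y)%VF = (rp y \o rs x)%VF - rs (pc x y) :=
  rep.2.2.2.2.2.2.1 x y.
Let R7 x y : (rp x \o ls y)%VF = - (rp x \o rp y)%VF := rep.2.2.2.2.2.2.2.1 x y.
Let R8 x y : lp (cc x y) = (ls x \o lc y)%VF - (ls y \o lc x)%VF :=
  rep.2.2.2.2.2.2.2.2.1 x y.
Let R9 x y : ls (cc x y) = (ls y \o ls x)%VF - (ls x \o ls y)%VF :=
  rep.2.2.2.2.2.2.2.2.2.1 x y.
Let R10 x y : (lp x \o lc y)%VF = lp (sc y x) - (ls y \o lp x)%VF :=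
  rep.2.2.2.2.2.2.2.2.2.2.1 x y.
Let R11 x y : lp (sc x y) = - lp (pc y x) := rep.2.2.2.2.2.2.2.2.2.2.2 x y.

(* An operator identity in 'End(V) is checked on the scalars u (T v): the
   goal minus the weighted hypotheses is then a polynomial identity. *)
Tactic Notation "pair_with" constr(u) constr(v) uconstr(c) constr(H) :=
  let k := constr:(c : K^o) in
  apply: (@addr_combination K^o _ _ _ _ k (congr1 (fun T : 'End(V) => u (T v)) H)).

Ltac pair_expand :=
  rewrite /lc /rc /cc ?(comp_lfunE, add_lfunE, opp_lfunE);
  rewrite ?(linmapD ls_lin, linmapD rs_lin, linmapD lp_lin, linmapD rp_lin);
  rewrite ?(add_lfunE, zero_lfunE, lfun_applyD, lfun_applyN, lfun_apply0).

Lemma rs_comp_lc_rc x y : (rs x \o (lc y + rc y))%VF = 0.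
Proof. by rewrite comp_lfunDr R5 R2 -addrA addKr subrr. Qed.

Lemma rp_comp_lc_rc x y : (rp x \o (lc y + rc y))%VF = 0.
Proof.
apply/lfunP => v; apply: lfun_forms_ext => u.
pair_with u v (-1) (R4 x y); pair_with u v (-1) (R7 x y).
by pair_expand; ring.
Qed.

Lemma rc_comp_lc_rc x y : (rc x \o (lc y + rc y))%VF = 0.
Proof. by rewrite comp_lfunDl rs_comp_lc_rc rp_comp_lc_rc addr0. Qed.

Lemma lc_circ x y : lc (cc x y) = (lc x \o lc y)%VF - (lc y \o lc x)%VF.
Proof.
apply/lfunP => v; apply: lfun_forms_ext => u.
pair_with u v (-2) (R8 x y); pair_with u v (-1) (R9 x y).
pair_with u v 1 (R10 x y); pair_with u v (-1) (R10 y x).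
pair_with u v 1 (R11 y x).
by pair_expand; ring.
Qed.

Lemma rc_circ x y : rc (cc x y) = (lc x \o rc y)%VF - (rc y \o lc x)%VF.
Proof.
apply/lfunP => v; apply: lfun_forms_ext => u.
pair_with u v (-1) (R3 x y); pair_with u v 1 (R6 x y).
pair_with u v 2 (R1 y x); pair_with u v (-1) (R5 y x).
pair_with u v (-1) (R7 y x); pair_with u v (-1) (rp_comp_lc_rc y x).
by pair_expand; ring.
Qed.

Lemma transpose_dual_R1 x y :
  ((ls y + rp y) \o (lc x + rc x))%VF
  = lp (cc y x) + rs (cc y x) + ((ls x + rp x) \o lc y)%VF.
Proof.
apply/lfunP => v; apply: lfun_forms_ext => u.
pair_with u v (-1) (R1 x y); pair_with u v 1 (rp_comp_lc_rc x y).
pair_with u v 1 (R8 y x); pair_with u v (-1) (rp_comp_lc_rc y x).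
by pair_expand; ring.
Qed.

Lemma transpose_dual_R2 x y :
  - ((ls y + rp y) \o (lp x + rs x))%VF
  = ((lp x + rs x) \o lc y)%VF - (lp (sc y x) + rs (sc y x)).
Proof.
apply/lfunP => v; apply: lfun_forms_ext => u.
pair_with u v 1 (R5 x y); pair_with u v 1 (R10 x y); pair_with u v 1 (R4 y x).
by pair_expand; ring.
Qed.

Lemma transpose_dual_R3 x y :
  - (lc (cc x y) + rc (cc x y))
  = - (lc x \o (lc y + rc y))%VF + ((lc y + rc y) \o lc x)%VF.
Proof.
apply/lfunP => v; apply: lfun_forms_ext => u.
pair_with u v 1 (lc_circ x y); pair_with u v 1 (rc_circ x y).
by pair_expand; ring.
Qed.

Lemma transpose_dual_R5 x y :
  (ls y \o (lp x + rs x))%VF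
  = lp (sc y x) + rs (sc y x) - ((lp x + rs x) \o lc y)%VF.
Proof.
apply/lfunP => v; apply: lfun_forms_ext => u.
pair_with u v (-1) (R5 x y); pair_with u v (-1) (R10 x y).
by pair_expand; ring.
Qed.

Lemma transpose_dual_R6 x y :
  ((ls y + rp y) \o lp x)%VF
  = - ((lp x + rs x) \o (lc y + rc y))%VF - (lp (pc x y) + rs (pc x y)).
Proof.
apply/lfunP => v; apply: lfun_forms_ext => u.
pair_with u v (-1) (R6 x y); pair_with u v (-1) (R10 x y).
pair_with u v (-1) (rs_comp_lc_rc x y); pair_with u v (-1) (R4 y x).
pair_with u v (-1) (R11 y x).
by pair_expand; ring.
Qed.

Let Ls x := - dualmap lc x.
Let Rs x := - dualmap lp x - dualmap rs x.
Let Lp x := dualmap lp x.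
Let Rp x := dualmap lc x + dualmap rc x.
Let Lc x := Ls x + Lp x.
Let Rc x := Rs x + Rp x.

Lemma Ls_transpose x : Ls x = transpose (lc x).
Proof. by rewrite /Ls dualmap_transpose opprK. Qed.

Lemma Rs_transpose x : Rs x = transpose (lp x + rs x).
Proof. by rewrite /Rs !dualmap_transpose !opprK transposeD. Qed.

Lemma Lp_transpose x : Lp x = - transpose (lp x).
Proof. exact: dualmap_transpose. Qed.

Lemma Rp_transpose x : Rp x = - transpose (lc x + rc x).
Proof. by rewrite /Rp !dualmap_transpose transposeD opprD. Qed.

Lemma Lc_transpose x : Lc x = transpose (ls x).
Proof. by rewrite /Lc Ls_transpose Lp_transpose -transposeN -transposeD /lc addrK. Qed.

Lemma Rc_transpose x : Rc x = - transpose (ls x + rp x).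
Proof.
rewrite /Rc Rs_transpose Rp_transpose -!transposeN -transposeD; congr transpose.
by rewrite /lc /rc [ls x + lp x]addrC (addrACA (lp x)) opprD addNKr.
Qed.

Ltac transpose_gather :=
  rewrite ?(Lc_transpose, Rc_transpose, Ls_transpose, Rs_transpose);
  rewrite ?(Lp_transpose, Rp_transpose);
  rewrite ?(comp_lfunNl, comp_lfunNr, opprK) -?transpose_comp -?transposeN -?transposeD.

Lemma dual_R1 x y : (Rp x \o Rc y)%VF = Rs (cc y x) - (Ls y \o Rc x)%VF.
Proof. by transpose_gather; rewrite transpose_dual_R1. Qed.

Lemma dual_R2 x y : (Rs x \o Rc y)%VF = (Ls y \o Rs x)%VF - Rs (sc y x).
Proof. by transpose_gather; rewrite transpose_dual_R2. Qed.

Lemma dual_R3 x y : Rp (cc x y) = (Rp y \o Ls x)%VF - (Ls x \o Rp y)%VF.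
Proof. by transpose_gather; rewrite transpose_dual_R3. Qed.

Lemma dual_R4 x y : (Rp x \o Rs y)%VF = - (Rp x \o Lp y)%VF.
Proof. by transpose_gather; rewrite comp_lfunDl rs_comp_lc_rc addr0. Qed.

Lemma dual_R5 x y : (Rs x \o Lc y)%VF = Rs (sc y x) - (Ls y \o Rs x)%VF.
Proof. by transpose_gather; rewrite transpose_dual_R5. Qed.

Lemma dual_R6 x y : (Lp x \o Rc y)%VF = (Rp y \o Rs x)%VF - Rs (pc x y).
Proof. by transpose_gather; rewrite transpose_dual_R6. Qed.

Lemma dual_R7 x y : (Rp x \o Ls y)%VF = - (Rp x \o Rp y)%VF.
Proof. by transpose_gather; rewrite [in RHS]comp_lfunDl rc_comp_lc_rc addr0. Qed.

Lemma dual_R8 x y : Lp (cc x y) = (Ls x \o Lc y)%VF - (Ls y \o Lc x)%VF.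
Proof. by transpose_gather; rewrite R8 opprB. Qed.

Lemma dual_R9 x y : Ls (cc x y) = (Ls y \o Ls x)%VF - (Ls x \o Ls y)%VF.
Proof. by transpose_gather; rewrite lc_circ. Qed.

Lemma dual_R10 x y : (Lp x \o Lc y)%VF = Lp (sc y x) - (Ls y \o Lp x)%VF.
Proof. by transpose_gather; rewrite R10 addKr. Qed.

Lemma dual_R11 x y : Lp (sc x y) = - Lp (pc y x).
Proof. by transpose_gather; rewrite R11 opprK. Qed.

Lemma dual_is_rep : is_rep sc pc Ls Rs Lp Rp.
Proof.
have lc_lin : linmap lc := linmap_add ls_lin lp_lin.
have rc_lin : linmap rc := linmap_add rs_lin rp_lin.
do ![split].
all: [> exact: linmap_opp (linmap_dualmap lc_lin)
     | exact: linmap_add (linmap_opp (linmap_dualmap lp_lin))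
                        (linmap_opp (linmap_dualmap rs_lin))
     | exact: linmap_dualmap lp_lin
     | exact: linmap_add (linmap_dualmap lc_lin) (linmap_dualmap rc_lin)
     | exact: dual_R1 | exact: dual_R2 | exact: dual_R3 | exact: dual_R4
     | exact: dual_R5 | exact: dual_R6 | exact: dual_R7 | exact: dual_R8
     | exact: dual_R9 | exact: dual_R10 | exact: dual_R11].
Qed.

End DualRepresentation.

Section RegularRepresentation.
Variables (K : fieldType) (A : vectType K) (sc pc : A -> A -> A).
Hypotheses (sc_bil : bilinear_op sc) (pc_bil : bilinear_op pc).
Hypothesis APL : anti_pre_Leibniz sc pc.

Lemma regular_is_rep : is_rep sc pc (Lmul sc) (Rmul sc) (Lmul pc) (Rmul pc).
Proof.
have [AL1 AL2 AL3 AL4] := APL.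
do ![split]; try by [exact: linmap_Lmul | exact: linmap_Rmul].
all: move=> x y; apply/lfunP => z.
all: rewrite !lfun_simp ?(LmulE sc_bil, LmulE pc_bil, RmulE sc_bil, RmulE pc_bil).
all: [> exact: AL1 | exact: AL2 | exact: AL3 | exact: AL4 | exact: AL2 | exact: AL3
     | exact: AL4 | exact: AL1 | exact: AL2 | exact: AL3 | exact: AL4].
Qed.

End RegularRepresentation.

Theorem proposition2p20 (K : fieldType) (charK0 : [pchar K] =i pred0)
    (A : vectType K) (sc pc : A -> A -> A)
    (hsc : bilinear_op sc) (hpc : bilinear_op pc)
    (hA : anti_pre_Leibniz sc pc) :
  (forall (V : vectType K) (ls rs lp rp : A -> 'End(V)),
     is_rep sc pc ls rs lp rp ->
     is_rep sc pc
       (fun x => - dualmap (fun y => ls y + lp y) x)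
       (fun x => - dualmap lp x - dualmap rs x)
       (fun x => dualmap lp x)
       (fun x => dualmap (fun y => ls y + lp y) x
                 + dualmap (fun y => rs y + rp y) x)) /\
  is_rep sc pc
    (fun x => - dualmap (Lmul (fun u v => sc u v + pc u v)) x)
    (fun x => - dualmap (Lmul pc) x - dualmap (Rmul sc) x)
    (fun x => dualmap (Lmul pc) x)
    (fun x => dualmap (Lmul (fun u v => sc u v + pc u v)) x
              + dualmap (Rmul (fun u v => sc u v + pc u v)) x).
Proof.
split=> [V ls rs lp rp rep|]; first exact: dual_is_rep.
rewrite (Lmul_add hsc hpc) (Rmul_add hsc hpc).
exact: dual_is_rep (regular_is_rep hsc hpc hA).
Qed.
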